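(* Under the standing assumptions below, let $k\in\{0,\dots,n-1\}$. If $c\in I$ and $x_{k+1}\notin\mathrm{var}(c)$, then $I_{k+1}(c)=I_k(c)$. Moreover, writing $I(x_{k+1})=\{c_1,\dots,c_m\}$ with $c_1\prec c_2\prec\dots\prec c_m$, we have $I_{k+1}(c_1)=I_k(c_1)$ and, for every $i<m$, $I_{k+1}(c_{i+1})=I_k(c_{i+1})\cup I_{k+1}(c_i)$.
   Context: Standing assumptions: $I$ is a finite set of weighted constraints with default values on a finite domain $D$ such that distinct constraints have distinct variable sets, $\mathcal H(I)=(\mathrm{var}(I),\{\mathrm{var}(c)\mid c\in I\})$ is $\beta$-acyclic, and $(x_1,\dots,x_n)$ is a $\beta$-elimination order of $\mathcal H(I)$ (an enumeration of $\mathrm{var}(I)$ such that for each $k$, $x_{k+1}$ is a nest point—the edges containing it are totally ordered by inclusion—of the hypergraph with vertices $\mathrm{var}(I)\setminus X_k$ and edges $\{e\setminus X_k\}\setminus\{\emptyset\}$). $X_k=\{x_1,\dots,x_k\}$. For $c,d\in I$: $c\prec d$ iff there is $k$ with $\mathrm{var}(c)\setminus X_k\subsetneq\mathrm{var}(d)\setminus X_k$ (this is a total order); $c\preceq d$ iff $c\prec d$ or $c=d$. Relations $\prec_k$ are defined inductively: $\prec_0=\emptyset$; $c\prec_{k+1}d$ iff $c\prec_k d$ or there is $e\in I$ with $c\preceq_k e\prec d$ and $x_{k+1}\in\mathrm{var}(d)\cap\mathrm{var}(e)$; here $c\preceq_k d$ iff $c=d$ or $c\prec_k d$. For $c\in I$,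 $I_k(c)=\{d\in I\mid d\preceq_k c\}$. For a variable $x$, $I(x)=\{c\in I\mid x\in\mathrm{var}(c)\}$. *)

From mathcomp Require Import all_boot.
Set Implicit Arguments. Unset Strict Implicit. Unset Printing Implicit Defensive.

(* Constraints form a finite type C (the instance I is all of C); each
   constraint c has a scope var c over the finite type V of variables.
   The weight functions / default values play no role in the lemma. *)

(* The elimination order (x_1,...,x_n) is x : 'I_n -> V, x_{i+1} = x i. *)
Definition Xset (V : finType) (n : nat) (x : 'I_n -> V) (k : nat) : {set V} :=
  [set x i | i in [pred i : 'I_n | i < k]].

Definition varI (V C : finType) (var : C -> {set V}) : {set V} :=
  \bigcup_(c : C) var c.

Definition verts_k (V C : finType) (var : C -> {set V}) n (x : 'I_n -> V) k
  : {set V} := varI var :\: Xset x k.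

Definition edges_k (V C : finType) (var : C -> {set V}) n (x : 'I_n -> V) k
  : {set {set V}} := [set var c :\: Xset x k | c : C] :\ set0.

Definition nest_point (V : finType) (Vs : {set V}) (E : {set {set V}}) (v : V)
  : bool :=
  (v \in Vs) &&
  [forall e in E, forall f in E,
     (v \in e) ==> (v \in f) ==> (e \subset f) || (f \subset e)].

Definition beta_elim_order (V C : finType) (var : C -> {set V}) n
  (x : 'I_n -> V) : Prop :=
  [/\ injective x, [set x i | i : 'I_n] = varI var &
      forall k : 'I_n, nest_point (verts_k var x k) (edges_k var x k) (x k)].

Definition beta_acyclic (V C : finType) (var : C -> {set V}) : Prop :=
  exists n (x : 'I_n -> V), beta_elim_order var x.

Definition prec (V C : finType) (var : C -> {set V}) n (x : 'I_n -> V)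
  : rel C := fun c d =>
  [exists k : 'I_n.+1, (var c :\: Xset x k) \proper (var d :\: Xset x k)].

Fixpoint precK (V C : finType) (var : C -> {set V}) n (x : 'I_n -> V)
  (k : nat) : rel C :=
  match k with
  | 0 => fun _ _ => false
  | k'.+1 => fun c d =>
      precK var x k' c d ||
      [exists e : C,
         [&& (c == e) || precK var x k' c e,
             prec var x e d &
             [exists i : 'I_n,
                [&& (i == k' :> nat), x i \in var d & x i \in var e]]]]
  end.

Definition Ik (V C : finType) (var : C -> {set V}) n (x : 'I_n -> V)
  (k : nat) (c : C) : {set C} :=
  [set d | (d == c) || precK var x k d c].

From mathcomp Require Import all_boot.

Set Implicit Arguments.
Unset Strict Implicit.
Unset Printing Implicit Defensive.

(* Unfolding the recursion, d ⪯_(k+1) c adds to d ⪯_k c exactly the d lying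
   ⪯_k-below some e ≺ c such that x_(k+1) lies in both var e and var c.  So
   nothing changes when x_(k+1) is not in var c.  Along the chain
   c_1 ≺ ... ≺ c_m of constraints containing x_(k+1), the admissible e below
   c_(i+1) are c_1, ..., c_i: c_i contributes I_k(c_i), and the earlier ones
   contribute what was already collected in I_(k+1)(c_i). *)

Section StrictSorted.
Variables (T : eqType) (r : rel T).
Hypotheses (r_irr : irreflexive r) (r_tr : transitive r).

Lemma sorted_rel_nth_ltn x0 s i j : sorted r s -> i < size s -> j < size s ->
  r (nth x0 s j) (nth x0 s i) -> j < i.
Proof.
move=> s_sorted si sj rji; case: ltngtP => // [lt_ij|eq_ij].
  have := r_tr rji (sorted_ltn_nth r_tr x0 s_sorted i j si sj lt_ij).
  by rewrite r_irr.
by move: rji; rewrite eq_ij r_irr.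
Qed.

Lemma sorted_head_minimal x0 s e : sorted r (x0 :: s) -> e \in x0 :: s ->
  ~~ r e x0.
Proof.
move=> s_sorted es; apply/negP => rex.
have := sorted_rel_nth_ltn (x0 := x0) (i := 0) (j := index e (x0 :: s))
  s_sorted isT.
by rewrite index_mem nth_index // ltn0 => /(_ es rex).
Qed.

Lemma sorted_rel_pred x0 s i e : sorted r s -> i.+1 < size s -> e \in s ->
  r e (nth x0 s i.+1) -> (e == nth x0 s i) || r e (nth x0 s i).
Proof.
move=> s_sorted si es.
rewrite -(nth_index x0 es) => /(sorted_rel_nth_ltn s_sorted si).
rewrite index_mem ltnS leq_eqVlt => /(_ es) /orP[/eqP->|lt].
  by rewrite eqxx.
have ei : index e s < size s by rewrite index_mem.
by rewrite (sorted_ltn_nth r_tr x0 s_sorted _ _ ei (ltnW si) lt) orbT.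
Qed.

End StrictSorted.

Lemma setD_subset_widen (T : finType) (A B X Y : {set T}) :
  A :\: X \subset B :\: X -> X \subset Y -> A :\: Y \subset B :\: Y.
Proof.
move=> /subsetP sABX /subsetP sXY.
apply/subsetP=> z; rewrite !inE => /andP[zY zA].
have zX : z \notin X by apply: contra zY; apply: sXY.
by have := sABX z; rewrite !inE zX zA zY => /(_ isT).
Qed.

Section Precedence.
Variables (V C : finType) (var : C -> {set V}) (n : nat) (x : 'I_n -> V).

Local Notation prec := (prec var x).
Local Notation Ik := (Ik var x).

Lemma Xset_subset j j' : j <= j' -> Xset x j \subset Xset x j'.
Proof.
move=> le_jj'; apply/subsetP=> z /imsetP[i]; rewrite inE => lt_ij ->.
by apply/imsetP; exists i; rewrite // inE (leq_trans lt_ij).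
Qed.

Lemma prec_irrefl : irreflexive prec.
Proof. by move=> c; apply/existsP=> -[k]; rewrite properE subxx. Qed.

(* Two strict inclusions after removing X_k1 and X_k2 both survive the removal
   of the larger of the two prefixes. *)
Lemma prec_trans : transitive prec.
Proof.
move=> d c e /existsP[k1 ltcd] /existsP[k2 ltde]; apply/existsP.
case: (leqP k1 k2) => [le12|lt21].
  exists k2; apply: sub_proper_trans ltde.
  exact: setD_subset_widen (proper_sub ltcd) (Xset_subset le12).
exists k1; apply: proper_sub_trans ltcd _.
exact: setD_subset_widen (proper_sub ltde) (Xset_subset (ltnW lt21)).
Qed.

Lemma in_Ik_succ (k : 'I_n) c d :
  (d \in Ik k.+1 c) = (d \in Ik k c) ||
    (x k \in var c) && [exists e, [&& d \in Ik k e, prec e c & x k \in var e]].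
Proof.
rewrite !inE /= orbA; congr (_ || _); apply/existsP/andP.
  case=> e /and3P[de ec /existsP[i /and3P[/eqP/val_inj eik]]].
  rewrite eik => xc xe; split=> //.
  by apply/existsP; exists e; rewrite inE de ec xe.
case=> xc /existsP[e]; rewrite inE => /and3P[de ec xe].
by exists e; rewrite de ec; apply/existsP; exists k; rewrite eqxx xc xe.
Qed.

Lemma Ik_succ_notin (k : 'I_n) c : x k \notin var c -> Ik k.+1 c = Ik k c.
Proof. by move=> /negbTE xc; apply/setP=> d; rewrite in_Ik_succ xc orbF. Qed.

Lemma Ik_succ_minimal (k : 'I_n) c :
  (forall e, x k \in var e -> ~~ prec e c) -> Ik k.+1 c = Ik k c.
Proof.
move=> c_min; apply/setP=> d; rewrite in_Ik_succ.
case: existsP => [[e /and3P[_ ec xe]]|_]; last by rewrite andbF orbF.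
by have := c_min e xe; rewrite ec.
Qed.

Lemma Ik_succ_step (k : 'I_n) c c' :
  x k \in var c -> x k \in var c' -> prec c' c ->
  (forall e, x k \in var e -> prec e c -> (e == c') || prec e c') ->
  Ik k.+1 c = Ik k c :|: Ik k.+1 c'.
Proof.
move=> xc xc' c'c c'_pred; apply/setP=> d.
rewrite in_setU !in_Ik_succ xc xc' /=.
apply/idP/idP=> [/orP[->//|/existsP[e /and3P[de ec xe]]]|].
  case/orP: (c'_pred e xe ec) => [/eqP ec'|ec'].
    by rewrite -ec' de orbT.
  apply/orP; right; apply/orP; right.
  by apply/existsP; exists e; rewrite de ec' xe.
case/or3P=> [->//|dc'|/existsP[e /and3P[de ec' xe]]]; apply/orP; right;
  apply/existsP.
  by exists c'; rewrite dc' c'c xc'.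
by exists e; rewrite de (prec_trans ec' c'c) xe.
Qed.

End Precedence.

Theorem lemma7 (V C : finType) (var : C -> {set V}) (n : nat) (x : 'I_n -> V)
  (var_inj : injective var)
  (hacyc : beta_acyclic var)
  (horder : beta_elim_order var x)
  (k : 'I_n) :
  (forall c : C, x k \notin var c -> Ik var x k.+1 c = Ik var x k c) /\
  (forall (c1 : C) (cs' : seq C),
     let cs := c1 :: cs' in
     uniq cs ->
     (forall c : C, (c \in cs) = (x k \in var c)) ->
     sorted (prec var x) cs ->
     Ik var x k.+1 c1 = Ik var x k c1 /\
     (forall i : nat, i.+1 < size cs ->
        Ik var x k.+1 (nth c1 cs i.+1)
        = Ik var x k (nth c1 cs i.+1) :|: Ik var x k.+1 (nth c1 cs i))).
Proof.
split=> [c|c1 cs' cs _ cs_var cs_sorted]; first exact: Ik_succ_notin.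
have irr := @prec_irrefl V C var n x; have tr := @prec_trans V C var n x.
split=> [|i i_lt].
  apply: Ik_succ_minimal => e; rewrite -cs_var.
  exact: (sorted_head_minimal irr tr cs_sorted).
have xci j : j < size cs -> x k \in var (nth c1 cs j).
  by move=> j_lt; rewrite -cs_var mem_nth.
apply: Ik_succ_step; rewrite ?xci ?(ltnW i_lt) //.
  exact: (sorted_ltn_nth tr c1 cs_sorted i i.+1 (ltnW i_lt) i_lt (ltnSn i)).
move=> e; rewrite -cs_var => ecs.
exact: (sorted_rel_pred irr tr cs_sorted i_lt ecs).
Qed.
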